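(* Let $\Gamma_1,\Gamma_2$ be finite connected graphs whose normalized Laplacians have a common eigenvalue $\lambda$, with eigenfunctions $f^1$ on $\Gamma_1$ and $f^2$ on $\Gamma_2$. Assume $f^1(p_1)=0$ and $f^2(p_2)=0$ for some vertices $p_1\in\Gamma_1$, $p_2\in\Gamma_2$. Let $\Gamma$ be the graph obtained from the disjoint union of $\Gamma_1$ and $\Gamma_2$ by identifying $p_1$ with $p_2$. Then $\lambda$ is an eigenvalue of the normalized Laplacian of $\Gamma$, with an eigenfunction equal to $f^1$ on $\Gamma_1$ and to $f^2$ on $\Gamma_2$.
   Context: For a finite simple graph without isolated vertices, write $i\sim j$ for adjacency and $n_i$ for the degree of $i$. The normalized Laplacian acts on real functions $v$ on the vertices by $\Delta v(i)=v(i)-\frac{1}{n_i}\sum_{j\sim i}v(j)$; $\lambda$ is an eigenvalue with eigenfunction $u$ if $u\not\equiv 0$ and $\frac{1}{n_i}\sum_{j\sim i}u(j)=(1-\lambda)u(i)$ for all $i$. *)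

From mathcomp Require Import all_boot all_order all_algebra.
Set Implicit Arguments. Unset Strict Implicit. Unset Printing Implicit Defensive.
Import Order.TTheory GRing.Theory Num.Theory.
Local Open Scope ring_scope.

Definition simple_graph (V : finType) (e : rel V) : Prop :=
  symmetric e /\ irreflexive e.

Definition connected_graph (V : finType) (e : rel V) : Prop :=
  forall x y : V, connect e x y.

Definition no_isolated (V : finType) (e : rel V) : Prop :=
  forall x : V, exists y, e x y.

Definition deg (V : finType) (e : rel V) (i : V) : nat := #|[pred j | e i j]|.

(* lam is an eigenvalue of the normalized Laplacian with eigenfunction u:
   u not identically zero and (1/n_i) sum_{j ~ i} u j = (1 - lam) u i. *)
Definition nl_eigenfunction (R : fieldType) (V : finType) (e : rel V)
    (lam : R) (u : V -> R) : Prop :=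
  (exists i, u i != 0) /\
  forall i : V, ((deg e i)%:R)^-1 * (\sum_(j | e i j) u j) = (1 - lam) * u i.

(* Gluing: vertices of Gamma_1, plus vertices of Gamma_2 other than p2;
   p2 is identified with p1. *)
Definition glue_vert (V1 V2 : finType) (p2 : V2) : finType :=
  (V1 + {x : V2 | x != p2})%type.

Definition glue_in2 (V1 V2 : finType) (p1 : V1) (p2 : V2) (b : V2)
  : glue_vert V1 p2 :=
  match insub b with
  | Some b' => inr b'
  | None => inl p1
  end.

Definition glue_rel (V1 V2 : finType) (e1 : rel V1) (e2 : rel V2)
    (p1 : V1) (p2 : V2) : rel (glue_vert V1 p2) :=
  fun x y =>
    match x, y with
    | inl a, inl b => e1 a b
    | inl a, inr b => (a == p1) && e2 p2 (val b)
    | inr a, inl b => (b == p1) && e2 (val a) p2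
    | inr a, inr b => e2 (val a) (val b)
    end.

Arguments glue_in2 {V1 V2} p1 p2 b.
Arguments glue_vert V1 {V2} p2.
Arguments glue_rel {V1 V2} e1 e2 p1 p2.

From mathcomp Require Import all_boot all_order all_algebra.
Import Order.TTheory GRing.Theory Num.Theory.
Set Implicit Arguments.
Unset Strict Implicit.
Local Open Scope ring_scope.

(* Away from the glued vertex, neighbourhoods (hence degrees and neighbour
   sums) are those of the original graphs.  At the glued vertex p both sides
   of the eigenvalue equation vanish: each f^i has zero neighbour sum at p_i,
   because the equation at p_i reads (1/n_{p_i}) sum_{j ~ p_i} f^i(j) = 0 and
   n_{p_i} > 0. *)

Section GluedSums.
Variables (M : nmodType) (V1 V2 : finType) (e1 : rel V1) (e2 : rel V2)
  (p1 : V1) (p2 : V2).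

Definition glue_fun (g1 : V1 -> M) (g2 : V2 -> M) (x : glue_vert V1 p2) : M :=
  match x with inl a => g1 a | inr b => g2 (val b) end.

Lemma glue_fun_in2 (g1 : V1 -> M) (g2 : V2 -> M) (b : V2) :
  g1 p1 = g2 p2 -> glue_fun g1 g2 (glue_in2 p1 p2 b) = g2 b.
Proof.
move=> g12; rewrite /glue_in2; case: insubP => [b' _ <- //|].
by rewrite negbK => /eqP ->.
Qed.

Lemma big_sub_neq (P : pred V2) (g : V2 -> M) :
  \sum_(b : {x : V2 | x != p2} | P (val b)) g (val b) =
  \sum_(x | (x != p2) && P x) g x.
Proof.
symmetry; rewrite (reindex_omap (val : {x : V2 | x != p2} -> V2) insub).
  by apply: eq_bigl => -[x x_p2] /=; rewrite insubT ?x_p2 /= eqxx andbT.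
by move=> x /andP[x_p2 _]; rewrite insubT.
Qed.

Lemma bigD1_if (P : pred V2) (g : V2 -> M) :
  \sum_(x | P x) g x =
  (if P p2 then g p2 else 0) + \sum_(x | (x != p2) && P x) g x.
Proof.
have [Pp2 | nPp2] := boolP (P p2).
  by rewrite (bigD1 p2) //; under eq_bigl do rewrite andbC.
rewrite add0r; apply: eq_bigl => x; case: eqP => [-> | //].
exact: negbTE.
Qed.

Lemma sum_glue_inl (g1 : V1 -> M) (g2 : V2 -> M) (a : V1) :
  ~~ e2 p2 p2 ->
  \sum_(x | glue_rel e1 e2 p1 p2 (inl a) x) glue_fun g1 g2 x =
  \sum_(j | e1 a j) g1 j + (if a == p1 then \sum_(j | e2 p2 j) g2 j else 0).
Proof.
move=> irr_p2; rewrite big_sumType /=; congr (_ + _).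
have [_ | _] := eqP; last by rewrite big_pred0.
by rewrite big_sub_neq [RHS]bigD1_if (negbTE irr_p2) add0r.
Qed.

Lemma sum_glue_inr (g1 : V1 -> M) (g2 : V2 -> M) (b : {x : V2 | x != p2}) :
  g1 p1 = g2 p2 ->
  \sum_(x | glue_rel e1 e2 p1 p2 (inr b) x) glue_fun g1 g2 x =
  \sum_(j | e2 (val b) j) g2 j.
Proof.
move=> g12; rewrite big_sumType /= big_sub_neq [RHS]bigD1_if; congr (_ + _).
have [b_p2 | _] := boolP (e2 (val b) p2).
  by rewrite (big_pred1 p1) // => a; rewrite andbT.
by rewrite big_pred0 // => a; rewrite andbF.
Qed.

End GluedSums.

Lemma deg_sum (V : finType) (e : rel V) (i : V) : deg e i = (\sum_(j | e i j) 1)%N.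
Proof. by rewrite sum1_card. Qed.

Lemma deg_glue_inl (V1 V2 : finType) (e1 : rel V1) (e2 : rel V2)
    (p1 : V1) (p2 : V2) (a : V1) :
  ~~ e2 p2 p2 -> a != p1 -> deg (glue_rel e1 e2 p1 p2) (inl a) = deg e1 a.
Proof.
move=> irr_p2 a_p1; rewrite !deg_sum.
have := @sum_glue_inl nat _ _ e1 e2 p1 p2 (fun _ => 1%N) (fun _ => 1%N) a irr_p2.
by rewrite (negbTE a_p1) addr0 => <-; apply: eq_bigr => -[].
Qed.

Lemma deg_glue_inr (V1 V2 : finType) (e1 : rel V1) (e2 : rel V2)
    (p1 : V1) (p2 : V2) (b : {x : V2 | x != p2}) :
  deg (glue_rel e1 e2 p1 p2) (inr b) = deg e2 (val b).
Proof.
rewrite !deg_sum.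
rewrite -(@sum_glue_inr nat _ _ e1 e2 p1 p2 (fun _ => 1%N) (fun _ => 1%N)) //.
by apply: eq_bigr => -[].
Qed.

Lemma nl_eigenfunction_sum_eq0 (R : numFieldType) (V : finType) (e : rel V)
    (lam : R) (u : V -> R) (p : V) :
  no_isolated e -> nl_eigenfunction e lam u -> u p = 0 ->
  \sum_(j | e p j) u j = 0.
Proof.
move=> noiso [_ eq_u] up0; have := eq_u p.
rewrite up0 mulr0 => /eqP; rewrite mulf_eq0 invr_eq0 pnatr_eq0 => /orP[|/eqP //].
have [q epq] := noiso p.
by move=> /eqP/card0_eq/(_ q); rewrite inE epq.
Qed.

Theorem theorem6 (R : realFieldType) (V1 V2 : finType)
    (e1 : rel V1) (e2 : rel V2)
    (simple1 : simple_graph e1) (simple2 : simple_graph e2)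
    (conn1 : connected_graph e1) (conn2 : connected_graph e2)
    (noiso1 : no_isolated e1) (noiso2 : no_isolated e2)
    (lam : R) (f1 : V1 -> R) (f2 : V2 -> R)
    (ef1 : nl_eigenfunction e1 lam f1) (ef2 : nl_eigenfunction e2 lam f2)
    (p1 : V1) (p2 : V2) (z1 : f1 p1 = 0) (z2 : f2 p2 = 0) :
  exists f : glue_vert V1 p2 -> R,
    nl_eigenfunction (glue_rel e1 e2 p1 p2) lam f /\
    (forall a : V1, f (inl a) = f1 a) /\
    (forall b : V2, f (glue_in2 p1 p2 b) = f2 b).
Proof.
have irr_p2 : ~~ e2 p2 p2 by case: simple2 => _ ->.
have f12 : f1 p1 = f2 p2 by rewrite z1 z2.
exists (glue_fun (p2 := p2) f1 f2); split; last by split=> // b; apply: glue_fun_in2.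
have [[i f1i] eq1] := ef1; split; first by exists (inl i).
case=> [a | b]; last first.
  by rewrite sum_glue_inr // deg_glue_inr; case: ef2 => _ ->.
rewrite sum_glue_inl //=; have [-> | a_p1] := eqP.
  by rewrite (nl_eigenfunction_sum_eq0 noiso1 ef1 z1)
    (nl_eigenfunction_sum_eq0 noiso2 ef2 z2) z1 addr0 !mulr0.
by rewrite addr0 deg_glue_inl ?eq1 //; apply/eqP.
Qed.
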